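(* Let $M\colon\mathbb{R}^2\to\mathbf{Vec}$ be a persistence module such that for every $(i,j)\in\mathbb{Z}^2$ the restriction $M|_{[i,i+1]\times[j,j+1]}$ is middle exact. Then $M$ is middle exact.
   Context: $\mathbb{R}^2$ and its subsets carry the product order. A module $M$ over $Q\subseteq\mathbb{R}^2$ is middle exact if for all $x\le x'$, $y\le y'$ with $a=(x,y),b=(x,y'),c=(x',y),d=(x',y')$ all in $Q$, the sequence $M_a\xrightarrow{(M(a\le b),M(a\le c))}M_b\oplus M_c\xrightarrow{M(b\le d)-M(c\le d)}M_d$ is exact at the middle. *)

From Stdlib Require Import Reals ZArith.
From HB Require Import structures.
From mathcomp Require Import all_boot all_order all_algebra.
Set Implicit Arguments. Unset Strict Implicit. Unset Printing Implicit Defensive.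
Import GRing.Theory.

Definition le2 (p q : R * R) : Prop := Rle (fst p) (fst q) /\ Rle (snd p) (snd q).

Record pmod (K : fieldType) := PMod {
  pm_sp : R * R -> lmodType K;
  pm_map : forall p q : R * R, le2 p q -> {linear pm_sp p -> pm_sp q};
  pm_id : forall p (h : le2 p p) (v : pm_sp p), pm_map h v = v;
  pm_comp : forall p q r (h1 : le2 p q) (h2 : le2 q r) (h3 : le2 p r)
              (v : pm_sp p), pm_map h2 (pm_map h1 v) = pm_map h3 v
}.

(* Middle exactness of M restricted to Q \subseteq R^2:
   for x <= x', y <= y' with a=(x,y), b=(x,y'), c=(x',y), d=(x',y') in Q, the
   sequence M_a -> M_b (+) M_c -> M_d (second map (u,v) |-> M(b<=d)u - M(c<=d)v)
   is exact at M_b (+) M_c, i.e. kernel = image. *)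
Definition middle_exact_on (K : fieldType) (M : pmod K) (Q : R * R -> Prop) : Prop :=
  forall (x x' y y' : R) (hx : Rle x x') (hy : Rle y y'),
    Q (x, y) -> Q (x, y') -> Q (x', y) -> Q (x', y') ->
    forall (hab : le2 (x, y) (x, y')) (hac : le2 (x, y) (x', y))
           (hbd : le2 (x, y') (x', y')) (hcd : le2 (x', y) (x', y')),
    (forall w : pm_sp M (x, y),
        (pm_map M hbd (pm_map M hab w) - pm_map M hcd (pm_map M hac w))%R = 0%R) /\
    (forall (u : pm_sp M (x, y')) (v : pm_sp M (x', y)),
        (pm_map M hbd u - pm_map M hcd v)%R = 0%R ->
        exists w : pm_sp M (x, y), pm_map M hab w = u /\ pm_map M hac w = v).

Definition middle_exact (K : fieldType) (M : pmod K) : Prop :=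
  middle_exact_on M (fun _ => True).

Definition unit_square (i j : Z) (p : R * R) : Prop :=
  Rle (IZR i) (fst p) /\ Rle (fst p) (IZR i + 1) /\
  Rle (IZR j) (snd p) /\ Rle (snd p) (IZR j + 1).

From Stdlib Require Import Reals ZArith Lra.
From mathcomp Require Import all_boot all_order all_algebra.
Import GRing.Theory.

(* For the rectangle with corners a = (x,y), b = (x,y'), c = (x',y),
   d = (x',y'), the inclusion "image in kernel" is just functoriality: both
   paths a -> b -> d and a -> c -> d equal M(a <= d).  The content is the
   inclusion "kernel in image", i.e. that every compatible pair (u,v) of
   elements of M_b and M_c lifts to M_a; we call such rectangles liftable.

   Liftability pastes: if two rectangles sharing an edge are liftable, so is
   their union (a diagram chase, done once horizontally and once vertically).
   By hypothesis every rectangle inside a unit grid square is liftable.  An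
   induction principle for real intervals (every interval is a finite
   concatenation of intervals lying in some [i, i+1]) then shows that all
   rectangles in a horizontal strip [j, j+1] are liftable, and, pasting
   strips vertically, that all rectangles are liftable. *)

Lemma up_IZR (z : Z) : up (IZR z) = Z.add z 1.
Proof.
symmetry; apply: up_tech; first exact: Rle_refl.
rewrite plus_IZR; lra.
Qed.

Lemma interval_induction (P : R -> R -> Prop) :
  (forall a b, Rle a b -> (exists i : Z, Rle (IZR i) a /\ Rle b (IZR i + 1)) ->
     P a b) ->
  (forall a b c, Rle a b -> Rle b c -> P a b -> P b c -> P a c) ->
  forall a b, Rle a b -> P a b.
Proof.
move=> unitP catP.
(* an interval ending before the next integer lies in [up a - 1, up a] *)
have short a b : Rle a b -> Rle b (IZR (up a)) -> P a b.
  move=> ab b_up; apply: unitP => //; exists (Z.sub (up a) 1).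
  have [? ?] := archimed a; rewrite minus_IZR; lra.
(* induction on the number of integers crossed beyond [up a] *)
have long n : forall a b, Rle a b -> Rle b (IZR (up a) + INR n) -> P a b.
  elim: n => [|n IHn] a b ab b_le.
    by apply: short; rewrite /= in b_le; lra.
  have [b_up|up_b] := Rle_dec b (IZR (up a)); first exact: short.
  have [? ?] := archimed a.
  apply: (catP a (IZR (up a)) b); [lra | lra | apply: short; lra |].
  apply: IHn; first lra.
  by rewrite up_IZR plus_IZR; rewrite S_INR in b_le; lra.
move=> a b ab; have [n ?] := INR_unbounded (b - IZR (up a)).
by apply: (long n); lra.
Qed.

Section Pasting.
Variables (K : fieldType) (M : pmod K).

Lemma pm_map_irr {p q} (h h' : le2 p q) (v : pm_sp M p) :
  pm_map M h v = pm_map M h' v.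
Proof.
have qq : le2 q q by split; apply: Rle_refl.
by rewrite -(pm_comp h qq h') pm_id.
Qed.

Definition liftable (x x' y y' : R) : Prop :=
  forall (hab : le2 (x, y) (x, y')) (hac : le2 (x, y) (x', y))
         (hbd : le2 (x, y') (x', y')) (hcd : le2 (x', y) (x', y'))
         (u : pm_sp M (x, y')) (v : pm_sp M (x', y)),
    pm_map M hbd u = pm_map M hcd v ->
    exists w : pm_sp M (x, y), pm_map M hab w = u /\ pm_map M hac w = v.

(* Horizontal pasting: lift first on the right rectangle, then on the left
   one, using the image of u on the common vertical edge. *)
Lemma liftable_hcat x0 x1 x2 y y' : Rle x0 x1 -> Rle x1 x2 -> Rle y y' ->
  liftable x0 x1 y y' -> liftable x1 x2 y y' -> liftable x0 x2 y y'.
Proof.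
move=> x01 x12 yy' left right hab hac hbd hcd u v uv.
have t01 : le2 (x0, y') (x1, y') by split; [|apply: Rle_refl].
have e1 : le2 (x1, y) (x1, y') by split; [apply: Rle_refl|].
have b12 : le2 (x1, y) (x2, y) by split; [|apply: Rle_refl].
have t12 : le2 (x1, y') (x2, y') by split; [|apply: Rle_refl].
have [w1 [w1u w1v]] := right e1 b12 t12 hcd (pm_map M t01 u) v
  ltac:(by rewrite (pm_comp _ _ hbd)).
have e0 : le2 (x0, y) (x0, y') by split; [apply: Rle_refl|].
have b01 : le2 (x0, y) (x1, y) by split; [|apply: Rle_refl].
have [w [wu ww1]] := left e0 b01 t01 e1 u w1 ltac:(by rewrite w1u).
exists w; split; first by rewrite (pm_map_irr hab e0).
by rewrite -(pm_comp b01 b12) ww1.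
Qed.

(* Vertical pasting: the transpose of the previous diagram chase. *)
Lemma liftable_vcat x x' y0 y1 y2 : Rle x x' -> Rle y0 y1 -> Rle y1 y2 ->
  liftable x x' y0 y1 -> liftable x x' y1 y2 -> liftable x x' y0 y2.
Proof.
move=> xx' y01 y12 bottom top hab hac hbd hcd u v uv.
have r01 : le2 (x', y0) (x', y1) by split; [apply: Rle_refl|].
have l12 : le2 (x, y1) (x, y2) by split; [apply: Rle_refl|].
have e1 : le2 (x, y1) (x', y1) by split; [|apply: Rle_refl].
have r12 : le2 (x', y1) (x', y2) by split; [apply: Rle_refl|].
have [w1 [w1u w1v]] := top l12 e1 hbd r12 u (pm_map M r01 v)
  ltac:(by rewrite (pm_comp _ _ hcd)).
have l01 : le2 (x, y0) (x, y1) by split; [apply: Rle_refl|].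
have e0 : le2 (x, y0) (x', y0) by split; [|apply: Rle_refl].
have [w [ww1 wv]] := bottom l01 e0 e1 r01 w1 v ltac:(by rewrite w1v).
exists w; split; last by rewrite (pm_map_irr hac e0).
by rewrite -(pm_comp l01 l12) ww1.
Qed.

Lemma liftable_of_middle_exact_on {Q : R * R -> Prop} :
  middle_exact_on M Q -> forall x x' y y', Rle x x' -> Rle y y' ->
  Q (x, y) -> Q (x, y') -> Q (x', y) -> Q (x', y') -> liftable x x' y y'.
Proof.
move=> exQ x x' y y' xx' yy' Qa Qb Qc Qd hab hac hbd hcd u v uv.
have [_ ker_in_im] := exQ x x' y y' xx' yy' Qa Qb Qc Qd hab hac hbd hcd.
by apply: ker_in_im; rewrite uv subrr.
Qed.

Hypothesis unit_exact : forall i j : Z, middle_exact_on M (unit_square i j).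

(* Rectangles inside a horizontal unit strip [j, j+1] are liftable:
   subdivide the horizontal side at the integers. *)
Lemma liftable_in_strip (j : Z) x x' y y' :
  Rle (IZR j) y -> Rle y y' -> Rle y' (IZR j + 1) -> Rle x x' ->
  liftable x x' y y'.
Proof.
move=> jy yy' y'j; move: x x'.
apply: (interval_induction (fun a b => liftable a b y y')).
  move=> a b ab [i [ia bi]].
  by apply: (liftable_of_middle_exact_on (unit_exact i j));
    rewrite // /unit_square /=; lra.
by move=> a b c ab bc; apply: liftable_hcat.
Qed.

(* Every rectangle is liftable: subdivide the vertical side at the
   integers and paste strips. *)
Lemma liftable_all x x' y y' : Rle x x' -> Rle y y' -> liftable x x' y y'.
Proof.
move=> xx'; move: y y'.
apply: (interval_induction (fun a b => liftable x x' a b)).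
  by move=> a b ab [j [ja bj]]; apply: (liftable_in_strip j).
by move=> a b c ab bc; apply: liftable_vcat.
Qed.

End Pasting.

Arguments liftable_all {K M} unit_exact {x x' y y'}.

Theorem lemma5p10 (K : fieldType) (M : pmod K) :
  (forall i j : Z, middle_exact_on M (unit_square i j)) ->
  middle_exact M.
Proof.
move=> unit_exact x x' y y' xx' yy' _ _ _ _ hab hac hbd hcd; split.
- (* image in kernel: both paths from a to d compose to M(a <= d) *)
  move=> w; have ad : le2 (x, y) (x', y') by split.
  by rewrite (pm_comp hab hbd ad) (pm_comp hac hcd ad) subrr.
- (* kernel in image: every rectangle is liftable *)
  move=> u v uv; apply: (liftable_all unit_exact xx' yy' hab hac hbd hcd u v).
  by apply/eqP; rewrite -subr_eq0 uv.
Qed.
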